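(* Let $f(r),\xi(r)$ be smooth functions on $r\ge1$ with $\xi=0$ on $[1,R]$ for some $R>1$, let $n\in\mathbb Z\setminus\{0\}$, and let $\phi_n$ be the solution (given by the Green function formula, decaying as $r\to\infty$) of $$\Big(\partial_r^2+\tfrac1r\partial_r-\tfrac{n^2}{r^2}\Big)\phi_n=\xi(r)\partial_rf(r),\qquad\phi_n(1)=0.$$ Then $$|n|\,\Big\|\frac{\phi_n(r)}r\Big\|_{L^\infty(1,\infty)}\lesssim\|\xi f\|_{L^\infty}+\|\xi'f\|_{L^1},$$ with a constant independent of $n$.
   Context: The decaying solution is $-2|n|\phi_n(r)=\int_1^r\frac{s^{1+|n|}-s^{1-|n|}}{r^{|n|}}F(s)ds+\int_r^\infty\big(s^{1-|n|}r^{|n|}-s^{1-|n|}r^{-|n|}\big)F(s)ds$ with $F=\xi\partial_rf$. *)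

From Stdlib Require Import Reals ZArith.
From Coquelicot Require Import Coquelicot.
Open Scope R_scope.

(* g is smooth on (0, +oo), an open neighbourhood of [1, +oo).
   (Any smooth function on [1,+oo) extends smoothly, so this loses nothing.) *)
Definition smooth_pos (g : R -> R) : Prop :=
  forall (k : nat) (x : R), 0 < x -> ex_derive_n g k x.

(* Green kernel for the operator d_r^2 + (1/r) d_r - k^2/r^2 with phi(1)=0,
   decaying at infinity; here k = |n| and s^(1-k) is written s / s^k. *)
Definition green_in (k : nat) (r s : R) : R :=
  (s ^ (k + 1) - s / s ^ k) / r ^ k.

Definition green_out (k : nat) (r s : R) : R :=
  (s / s ^ k) * r ^ k - (s / s ^ k) / r ^ k.

Definition is_green_solution (n : Z) (F phi : R -> R) : Prop :=
  forall r : R, 1 <= r ->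
    exists I : R,
      is_RInt_gen (fun s => green_out (Z.abs_nat n) r s * F s)
                  (at_point r) (Rbar_locally p_infty) I /\
      -2 * IZR (Z.abs n) * phi r
        = RInt (fun s => green_in (Z.abs_nat n) r s * F s) 1 r + I.

(* Integrate by parts in each Green integral: with g the kernel as a function
   of s and F = xi f', one has  int g xi f' = [g xi f] - int g' xi f - int g xi' f.
   On its range each kernel is monotone in s and bounded by r, so the boundary
   terms and int |g'| |xi f| are each O(r ||xi f||_oo), while int |g xi' f| is at
   most r ||xi' f||_1.  Hence |n| |phi_n(r)| <= r (4A + B), uniformly in n. *)

From Stdlib Require Import Reals ZArith Lra Lia.
From Coquelicot Require Import Coquelicot.
Open Scope R_scope.

Lemma smooth_pos_is_derive g x : smooth_pos g -> 0 < x -> is_derive g x (Derive g x).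
Proof. intros Hg Hx. apply Derive_correct, (Hg 1%nat x Hx). Qed.

Lemma smooth_pos_continuous g x : smooth_pos g -> 0 < x -> continuous g x.
Proof.
  intros Hg Hx.
  apply (ex_derive_continuous (K := R_AbsRing) (V := R_NormedModule)), (Hg 1%nat x Hx).
Qed.

Lemma smooth_pos_continuous_Derive g x : smooth_pos g -> 0 < x -> continuous (Derive g) x.
Proof.
  intros Hg Hx.
  apply (ex_derive_continuous (K := R_AbsRing) (V := R_NormedModule)), (Hg 2%nat x Hx).
Qed.

Lemma continuous_Rmult (f g : R -> R) x :
  continuous f x -> continuous g x -> continuous (fun y => f y * g y) x.
Proof. apply (continuous_mult f g). Qed.

Lemma continuous_Rplus (f g : R -> R) x :
  continuous f x -> continuous g x -> continuous (fun y => f y + g y) x.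
Proof. apply (continuous_plus (V := R_NormedModule) f g). Qed.

Lemma ex_RInt_continuous_le (f : R -> R) a b :
  a <= b -> (forall s, a <= s <= b -> continuous f s) -> ex_RInt f a b.
Proof.
  intros Hab Hf. apply (ex_RInt_continuous (V := R_CompleteNormedModule)).
  rewrite Rmin_left, Rmax_right by lra. exact Hf.
Qed.

Lemma RInt_parts (u u' v v' : R -> R) a b :
  a <= b ->
  (forall s, a <= s <= b -> is_derive u s (u' s) /\ continuous u' s) ->
  (forall s, a <= s <= b -> is_derive v s (v' s) /\ continuous v' s) ->
  RInt (fun s => u s * v' s) a b = u b * v b - u a * v a - RInt (fun s => u' s * v s) a b.
Proof.
  intros Hab Hu Hv.
  assert (Cu : forall s, a <= s <= b -> continuous u s)
    by (intros s Hs; apply (ex_derive_continuous (K := R_AbsRing) (V := R_NormedModule));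
        eexists; apply Hu, Hs).
  assert (Cv : forall s, a <= s <= b -> continuous v s)
    by (intros s Hs; apply (ex_derive_continuous (K := R_AbsRing) (V := R_NormedModule));
        eexists; apply Hv, Hs).
  assert (I1 : ex_RInt (fun s => u' s * v s) a b)
    by (apply ex_RInt_continuous_le; auto; intros; apply continuous_Rmult; [apply Hu|apply Cv]; auto).
  assert (I2 : ex_RInt (fun s => u s * v' s) a b)
    by (apply ex_RInt_continuous_le; auto; intros; apply continuous_Rmult; [apply Cu|apply Hv]; auto).
  assert (Huv : is_RInt (fun s => u' s * v s + u s * v' s) a b (u b * v b - u a * v a)).
  { apply (is_RInt_derive (fun s => u s * v s)); rewrite Rmin_left, Rmax_right by lra.
    - intros s Hs. destruct (Hu s Hs) as [Du _]; destruct (Hv s Hs) as [Dv _].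
      apply (is_derive_mult u v s _ _ Du Dv Rmult_comm).
    - intros s Hs. apply continuous_Rplus.
      + apply continuous_Rmult; [apply Hu|apply Cv]; auto.
      + apply continuous_Rmult; [apply Cu|apply Hv]; auto. }
  assert (Hsum := RInt_plus (V := R_CompleteNormedModule) _ _ a b I1 I2).
  change (RInt (fun s => u' s * v s + u s * v' s) a b
          = RInt (fun s => u' s * v s) a b + RInt (fun s => u s * v' s) a b) in Hsum.
  rewrite (is_RInt_unique _ _ _ _ Huv) in Hsum. lra.
Qed.

Lemma RInt_Rabs_derive_monotone (g g' : R -> R) a b :
  a <= b ->
  (forall s, a <= s <= b -> is_derive g s (g' s) /\ continuous g' s) ->
  (forall s, a <= s <= b -> 0 <= g' s) \/ (forall s, a <= s <= b -> g' s <= 0) ->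
  RInt (fun s => Rabs (g' s)) a b = Rabs (g b - g a).
Proof.
  intros Hab Hg Hsign.
  assert (Hint : is_RInt g' a b (g b - g a)).
  { apply (is_RInt_derive g g'); rewrite Rmin_left, Rmax_right by lra; apply Hg. }
  assert (Ig : ex_RInt g' a b) by (eexists; exact Hint).
  assert (E : RInt g' a b = g b - g a) by exact (is_RInt_unique _ _ _ _ Hint).
  destruct Hsign as [Hpos|Hneg].
  - rewrite (RInt_ext _ g') by (intros s Hs; rewrite Rmin_left, Rmax_right in Hs by lra;
                                apply Rabs_pos_eq, Hpos; lra).
    rewrite E, Rabs_pos_eq; [reflexivity|].
    rewrite <- E. apply RInt_ge_0; auto. intros s Hs; apply Hpos; lra.
  - assert (Eabs : RInt (fun s => Rabs (g' s)) a b = RInt (fun s => - g' s) a b).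
    { apply RInt_ext. intros s Hs. rewrite Rmin_left, Rmax_right in Hs by lra.
      apply Rabs_left1, Hneg; lra. }
    rewrite Eabs.
    assert (Hopp : RInt (fun s => - g' s) a b = - RInt g' a b)
      by exact (RInt_opp (V := R_CompleteNormedModule) g' a b Ig).
    assert (Hnonneg : 0 <= RInt (fun s => - g' s) a b).
    { apply RInt_ge_0; [lra| |intros s Hs; apply Ropp_0_ge_le_contravar, Rle_ge, Hneg; lra].
      apply (ex_RInt_opp (V := R_NormedModule) g' a b Ig). }
    rewrite Hopp, E in *. rewrite Rabs_left1; lra.
Qed.

Lemma Rabs_is_RInt_gen_le (h : R -> R) r I K :
  is_RInt_gen h (at_point r) (Rbar_locally p_infty) I ->
  (forall M, r <= M -> Rabs (RInt h r M) <= K) -> Rabs I <= K.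
Proof.
  intros HI HK. apply Rnot_lt_le. intros Hlt.
  assert (Heps : 0 < Rabs I - K) by lra.
  destruct (HI _ (locally_ball I (mkposreal _ Heps))) as [P Q HP [M HM] Hlim].
  set (x := Rmax M r + 1).
  destruct (Hlim r x HP (HM x ltac:(unfold x; pose proof (Rmax_l M r); lra)))
    as [y [Hy Hball]].
  rewrite <- (is_RInt_unique _ _ _ _ Hy) in Hball.
  assert (HKx := HK x ltac:(unfold x; pose proof (Rmax_r M r); lra)).
  set (v := RInt h r x : R) in *.
  assert (Hv : Rabs (v - I) < Rabs I - K) by exact Hball.
  assert (Htri : Rabs I <= Rabs v + Rabs (v - I)).
  { rewrite (Rabs_minus_sym v I). replace I with (v + (I - v)) at 1 by ring. apply Rabs_triang. }
  lra.
Qed.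

Lemma RInt_subinterval_le (h : R -> R) c a b B :
  c <= a <= b ->
  (forall s, c <= s -> continuous h s /\ 0 <= h s) ->
  (forall M, c <= M -> RInt h c M <= B) ->
  RInt h a b <= B.
Proof.
  intros Hab Hh HB.
  assert (Iab : forall u v, c <= u <= v -> ex_RInt h u v)
    by (intros u v Huv; apply ex_RInt_continuous_le; [lra|intros; apply Hh; lra]).
  assert (Hsplit : RInt h c a + RInt h a b = RInt h c b)
    by exact (RInt_Chasles (V := R_CompleteNormedModule) h c a b
                (Iab c a ltac:(lra)) (Iab a b Hab)).
  assert (Hca : 0 <= RInt h c a)
    by (apply RInt_ge_0; [lra|apply Iab; lra|intros; apply Hh; lra]).
  specialize (HB b ltac:(lra)). lra.
Qed.

Section SmoothParts.

Variables (g g' xi f : R -> R) (a b G A : R).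
Hypotheses (Ha : 0 < a) (Hab : a <= b) (Hxi : smooth_pos xi) (Hf : smooth_pos f).
Hypothesis Hg : forall s, a <= s <= b -> is_derive g s (g' s) /\ continuous g' s.
Hypothesis Hsign :
  (forall s, a <= s <= b -> 0 <= g' s) \/ (forall s, a <= s <= b -> g' s <= 0).
Hypothesis HG : forall s, a <= s <= b -> Rabs (g s) <= G.
Hypothesis HA : forall s, a <= s <= b -> Rabs (xi s * f s) <= A.

Let continuous_g s : a <= s <= b -> continuous g s.
Proof.
  intros Hs. apply (ex_derive_continuous (K := R_AbsRing) (V := R_NormedModule)).
  eexists; apply Hg, Hs.
Qed.

Let continuous_smooth (h : R -> R) s :
  smooth_pos h -> a <= s <= b -> continuous h s /\ continuous (Derive h) s.
Proof.
  intros Hh Hs.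
  split; [apply smooth_pos_continuous|apply smooth_pos_continuous_Derive]; auto; lra.
Qed.

Let continuous_parts_remainder s :
  a <= s <= b -> continuous (fun s => g' s * xi s + g s * Derive xi s) s.
Proof.
  intros Hs. apply continuous_Rplus; apply continuous_Rmult;
    solve [apply Hg; auto | apply continuous_g; auto | apply continuous_smooth; auto].
Qed.

Lemma RInt_mul_Derive_parts :
  RInt (fun s => g s * (xi s * Derive f s)) a b
  = g b * xi b * f b - g a * xi a * f a
    - RInt (fun s => (g' s * xi s + g s * Derive xi s) * f s) a b.
Proof.
  rewrite <- (RInt_parts (fun s => g s * xi s) _ f (Derive f)); auto.
  - apply RInt_ext. intros s _. symmetry. apply Rmult_assoc.
  - intros s Hs. split; [|apply continuous_parts_remainder, Hs].
    apply (is_derive_mult g xi s); [apply Hg, Hs|apply smooth_pos_is_derive; auto; lra|].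
    intros; apply Rmult_comm.
  - intros s Hs. split; [apply smooth_pos_is_derive; auto; lra|apply continuous_smooth; auto].
Qed.

Lemma Rabs_RInt_parts_remainder_le :
  Rabs (RInt (fun s => (g' s * xi s + g s * Derive xi s) * f s) a b)
  <= A * Rabs (g b - g a) + G * RInt (fun s => Rabs (Derive xi s * f s)) a b.
Proof.
  set (w := fun s => g' s * xi s + g s * Derive xi s).
  assert (Cwf : forall s, a <= s <= b -> continuous (fun s => w s * f s) s)
    by (intros; apply continuous_Rmult;
        [apply continuous_parts_remainder|apply continuous_smooth]; auto).
  assert (Hpt : forall s, a <= s <= b ->
            Rabs (w s * f s) <= A * Rabs (g' s) + G * Rabs (Derive xi s * f s)).
  { intros s Hs. unfold w.
    replace ((g' s * xi s + g s * Derive xi s) * f s)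
      with (g' s * (xi s * f s) + g s * (Derive xi s * f s)) by ring.
    eapply Rle_trans; [apply Rabs_triang|]. rewrite (Rabs_mult (g' s)), (Rabs_mult (g s)).
    specialize (HA s Hs). specialize (HG s Hs).
    assert (0 <= Rabs (g' s)) by apply Rabs_pos.
    assert (0 <= Rabs (Derive xi s * f s)) by apply Rabs_pos.
    nra. }
  assert (Hbound : is_RInt (fun s => A * Rabs (g' s) + G * Rabs (Derive xi s * f s)) a b
            (A * Rabs (g b - g a) + G * RInt (fun s => Rabs (Derive xi s * f s)) a b)).
  { apply (is_RInt_plus (V := R_NormedModule)); apply (is_RInt_scal (V := R_NormedModule)).
    - rewrite <- (RInt_Rabs_derive_monotone g g'); auto.
      apply (RInt_correct (V := R_CompleteNormedModule)), ex_RInt_continuous_le; auto.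
      intros s Hs; apply continuous_Rabs_comp, Hg, Hs.
    - apply (RInt_correct (V := R_CompleteNormedModule)), ex_RInt_continuous_le; auto.
      intros; apply continuous_Rabs_comp, continuous_Rmult; apply continuous_smooth; auto. }
  rewrite <- (is_RInt_unique _ _ _ _ Hbound).
  apply Rle_trans with (RInt (fun s => Rabs (w s * f s)) a b).
  - apply abs_RInt_le; auto. apply ex_RInt_continuous_le; auto.
  - apply RInt_le; auto.
    + apply ex_RInt_continuous_le; auto. intros; apply continuous_Rabs_comp, Cwf; auto.
    + eexists; exact Hbound.
    + intros s Hs. apply Hpt. lra.
Qed.

Lemma Rabs_RInt_parts_le :
  Rabs (RInt (fun s => g s * (xi s * Derive f s)) a b)
  <= 4 * G * A + G * RInt (fun s => Rabs (Derive xi s * f s)) a b.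
Proof.
  assert (Hend : forall s, a <= s <= b -> Rabs (g s * xi s * f s) <= G * A).
  { intros s Hs. rewrite Rmult_assoc, Rabs_mult.
    apply Rmult_le_compat; try apply Rabs_pos; auto. }
  assert (Hdiff : Rabs (g b - g a) <= 2 * G).
  { unfold Rminus. eapply Rle_trans; [apply Rabs_triang|]. rewrite Rabs_Ropp.
    assert (HGa := HG a). assert (HGb := HG b). lra. }
  assert (A0 : 0 <= A)
    by (apply Rle_trans with (Rabs (xi a * f a)); [apply Rabs_pos|apply HA; lra]).
  assert (A * Rabs (g b - g a) <= A * (2 * G)) by (apply Rmult_le_compat_l; auto).
  assert (Hrest := Rabs_RInt_parts_remainder_le).
  assert (Hea := Hend a). assert (Heb := Hend b).
  rewrite RInt_mul_Derive_parts.
  set (x := g b * xi b * f b) in *; set (y := g a * xi a * f a) in *.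
  set (z := RInt (fun s => (g' s * xi s + g s * Derive xi s) * f s) a b) in *.
  assert (Rabs (x - y - z) <= Rabs x + Rabs y + Rabs z).
  { unfold Rminus. pose proof (Rabs_triang (x + - y) (- z)). pose proof (Rabs_triang x (- y)).
    rewrite !Rabs_Ropp in *. lra. }
  lra.
Qed.

End SmoothParts.

Definition dgreen_in (k : nat) (r s : R) : R :=
  ((INR k + 1) * s ^ k + (INR k - 1) / s ^ k) / r ^ k.

Definition dgreen_out (k : nat) (r s : R) : R :=
  (1 - INR k) / s ^ k * (r ^ k - / r ^ k).

Lemma is_derive_green_in k r s : 0 < s -> is_derive (green_in k r) s (dgreen_in k r s).
Proof.
  intros Hs. unfold green_in, dgreen_in.
  assert (Hsk : forall j, s ^ j <> 0) by (intros; apply pow_nonzero; lra).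
  auto_derive; [exact (Hsk k)|].
  rewrite plus_INR, Nat.add_1_r. destruct k as [|k]; [simpl; field|].
  rewrite S_INR. cbn [pow Nat.pred]. change (INR 1) with 1.
  set (q := / (r * r ^ k)). unfold Rdiv. fold q.
  field. split; [apply Hsk|lra].
Qed.

Lemma is_derive_green_out k r s : 0 < s -> is_derive (green_out k r) s (dgreen_out k r s).
Proof.
  intros Hs. unfold green_out, dgreen_out.
  assert (Hsk : forall j, s ^ j <> 0) by (intros; apply pow_nonzero; lra).
  auto_derive; [repeat split; apply Hsk|].
  destruct k as [|k]; [simpl; field|].
  rewrite S_INR. cbn [pow Nat.pred]. set (q := / (r * r ^ k)).
  field. split; [apply Hsk|lra].
Qed.

Lemma Rabs_green_in_le k r s : 1 <= s <= r -> Rabs (green_in k r s) <= r.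
Proof.
  intros Hs. unfold green_in.
  assert (Hsk : 1 <= s ^ k) by (apply pow_R1_Rle; lra).
  assert (Hrk : 0 < r ^ k) by (apply pow_lt; lra).
  assert (Hlow : s / s ^ k <= s ^ (k + 1)).
  { rewrite Nat.add_1_r; simpl. apply Rle_div_l; [lra|]. assert (1 <= s ^ k * s ^ k) by nra. nra. }
  assert (Hup : s ^ (k + 1) <= r * r ^ k).
  { rewrite Nat.add_1_r. apply (pow_incr s r (S k)); lra. }
  assert (Hpos : 0 <= s / s ^ k) by (apply Rdiv_le_0_compat; lra).
  rewrite Rabs_pos_eq by (apply Rdiv_le_0_compat; lra).
  apply Rle_div_l; lra.
Qed.

Lemma Rabs_green_out_le k r s : (1 <= k)%nat -> 1 <= r <= s -> Rabs (green_out k r s) <= r.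
Proof.
  intros Hk Hs. unfold green_out.
  destruct k as [|j]; [lia|].
  assert (Hrj : r ^ j <= s ^ j) by (apply pow_incr; lra).
  assert (Hr1 : 1 <= r ^ S j) by (apply pow_R1_Rle; lra).
  assert (Hsj : 0 < s ^ j) by (apply pow_lt; lra).
  assert (E : s / s ^ S j = / s ^ j) by (simpl; field; lra).
  rewrite E.
  assert (Hinv : / r ^ S j <= 1) by (rewrite <- Rinv_1; apply Rinv_le_contravar; lra).
  assert (Hq : 0 < / s ^ j) by (apply Rinv_0_lt_compat; lra).
  assert (Hrinv : 0 < / r ^ S j) by (apply Rinv_0_lt_compat; lra).
  assert (Hmain : / s ^ j * r ^ S j <= r).
  { simpl. replace (/ s ^ j * (r * r ^ j)) with (r * (r ^ j / s ^ j)) by (field; lra).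
    assert (r ^ j / s ^ j <= 1) by (apply Rle_div_l; lra). nra. }
  rewrite Rabs_pos_eq; [|unfold Rdiv; nra].
  unfold Rdiv. nra.
Qed.

Lemma dgreen_in_ge0 k r s : (1 <= k)%nat -> 0 < s -> 0 < r -> 0 <= dgreen_in k r s.
Proof.
  intros Hk Hs Hr. unfold dgreen_in.
  assert (HK : 1 <= INR k) by (apply (le_INR 1); exact Hk).
  assert (0 < s ^ k) by (apply pow_lt; lra).
  assert (0 < r ^ k) by (apply pow_lt; lra).
  apply Rdiv_le_0_compat; [|lra].
  apply Rplus_le_le_0_compat; [nra|apply Rdiv_le_0_compat; lra].
Qed.

Lemma dgreen_out_le0 k r s : (1 <= k)%nat -> 0 < s -> 1 <= r -> dgreen_out k r s <= 0.
Proof.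
  intros Hk Hs Hr. unfold dgreen_out.
  assert (HK : 1 <= INR k) by (apply (le_INR 1); exact Hk).
  assert (0 < s ^ k) by (apply pow_lt; lra).
  assert (Hr1 : 1 <= r ^ k) by (apply pow_R1_Rle; lra).
  assert (/ r ^ k <= 1) by (rewrite <- Rinv_1; apply Rinv_le_contravar; lra).
  assert ((1 - INR k) / s ^ k <= 0) by (apply Rmult_le_0_r; [lra|apply Rlt_le, Rinv_0_lt_compat; lra]).
  nra.
Qed.

Lemma continuous_dgreen_in k r s : 0 < s -> continuous (dgreen_in k r) s.
Proof.
  intros Hs. apply (ex_derive_continuous (dgreen_in k r)). unfold dgreen_in.
  auto_derive. apply pow_nonzero; lra.
Qed.

Lemma continuous_dgreen_out k r s : 0 < s -> continuous (dgreen_out k r) s.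
Proof.
  intros Hs. apply (ex_derive_continuous (dgreen_out k r)). unfold dgreen_out.
  auto_derive. apply pow_nonzero; lra.
Qed.

Section GreenBounds.

Variables (f xi : R -> R) (A B : R).
Hypotheses (Hf : smooth_pos f) (Hxi : smooth_pos xi).
Hypothesis HA : forall s, 1 <= s -> Rabs (xi s * f s) <= A.
Hypothesis HB : forall M, 1 <= M -> RInt (fun s => Rabs (Derive xi s * f s)) 1 M <= B.

Lemma RInt_Rabs_Derive_mul_le a b : 1 <= a <= b ->
  RInt (fun s => Rabs (Derive xi s * f s)) a b <= B.
Proof.
  intros Hab. apply (RInt_subinterval_le _ 1); auto.
  intros s Hs. split; [|apply Rabs_pos].
  apply continuous_Rabs_comp, continuous_Rmult;
    [apply smooth_pos_continuous_Derive|apply smooth_pos_continuous]; auto; lra.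
Qed.

Lemma Rabs_RInt_green_in_le k r : (1 <= k)%nat -> 1 <= r ->
  Rabs (RInt (fun s => green_in k r s * (xi s * Derive f s)) 1 r) <= r * (4 * A + B).
Proof.
  intros Hk Hr.
  eapply Rle_trans; [apply (Rabs_RInt_parts_le (green_in k r) (dgreen_in k r)); auto; try lra|].
  - intros s Hs. split; [apply is_derive_green_in|apply continuous_dgreen_in]; lra.
  - left. intros s Hs. apply dgreen_in_ge0; auto; lra.
  - intros s Hs. apply Rabs_green_in_le. exact Hs.
  - intros s Hs. apply HA. lra.
  - assert (r * RInt (fun s => Rabs (Derive xi s * f s)) 1 r <= r * B)
      by (apply Rmult_le_compat_l; [lra|apply RInt_Rabs_Derive_mul_le; lra]).
    lra.
Qed.

Lemma Rabs_RInt_green_out_le k r M : (1 <= k)%nat -> 1 <= r <= M ->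
  Rabs (RInt (fun s => green_out k r s * (xi s * Derive f s)) r M) <= r * (4 * A + B).
Proof.
  intros Hk Hr.
  eapply Rle_trans; [apply (Rabs_RInt_parts_le (green_out k r) (dgreen_out k r)); auto; try lra|].
  - intros s Hs. split; [apply is_derive_green_out|apply continuous_dgreen_out]; lra.
  - right. intros s Hs. apply dgreen_out_le0; auto; lra.
  - intros s Hs. apply Rabs_green_out_le; auto; lra.
  - intros s Hs. apply HA. lra.
  - assert (r * RInt (fun s => Rabs (Derive xi s * f s)) r M <= r * B)
      by (apply Rmult_le_compat_l; [lra|apply RInt_Rabs_Derive_mul_le; lra]).
    lra.
Qed.

End GreenBounds.

Theorem lemma4p6 :
  exists C : R, 0 < C /\
    forall (n : Z) (f xi phi : R -> R) (Rr A B : R),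
      n <> 0%Z ->
      smooth_pos f -> smooth_pos xi ->
      1 < Rr -> (forall r, 1 <= r <= Rr -> xi r = 0) ->
      is_green_solution n (fun s => xi s * Derive f s) phi ->
      (* A bounds || xi f ||_{L^oo(1,oo)} *)
      (forall r, 1 <= r -> Rabs (xi r * f r) <= A) ->
      (* B bounds || xi' f ||_{L^1(1,oo)} *)
      (forall M, 1 <= M -> RInt (fun s => Rabs (Derive xi s * f s)) 1 M <= B) ->
      forall r, 1 <= r -> IZR (Z.abs n) * Rabs (phi r / r) <= C * (A + B).
Proof.
  exists 4. split; [lra|].
  (* The estimate does not use the vanishing of xi near r = 1. *)
  intros n f xi phi Rr A B Hn Hf Hxi _ _ Hgreen HA HB r Hr.
  set (k := Z.abs_nat n).
  assert (Hk : (1 <= k)%nat) by (unfold k; lia).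
  assert (Hkn : IZR (Z.abs n) = INR k)
    by (unfold k; rewrite INR_IZR_INZ, Zabs2Nat.id_abs; reflexivity).
  assert (B0 : 0 <= B).
  { assert (Hz : RInt (fun s => Rabs (Derive xi s * f s)) 1 1 = 0) by exact (RInt_point 1 _).
    rewrite <- Hz. apply HB; lra. }
  destruct (Hgreen r Hr) as [I [HI Hphi]]. fold k in HI, Hphi.
  assert (Hin := Rabs_RInt_green_in_le f xi A B Hf Hxi HA HB k r Hk Hr).
  assert (Hout : Rabs I <= r * (4 * A + B)).
  { apply (Rabs_is_RInt_gen_le _ r I _ HI). intros M HM.
    apply (Rabs_RInt_green_out_le f xi A B Hf Hxi HA HB); auto; lra. }
  assert (Hk2 : 2 * INR k * Rabs (phi r) <= 2 * (r * (4 * A + B))).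
  { replace (2 * INR k * Rabs (phi r)) with (Rabs (-2 * IZR (Z.abs n) * phi r)).
    - rewrite Hphi. eapply Rle_trans; [apply Rabs_triang|]. lra.
    - rewrite Hkn, !Rabs_mult, Rabs_left, Rabs_pos_eq by (try apply pos_INR; lra). ring. }
  rewrite Hkn. unfold Rdiv.
  rewrite Rabs_mult, (Rabs_pos_eq (/ r)) by (apply Rlt_le, Rinv_0_lt_compat; lra).
  apply Rle_trans with (4 * A + B); [|lra].
  apply (Rmult_le_reg_r r); [lra|].
  replace (INR k * (Rabs (phi r) * / r) * r) with (INR k * Rabs (phi r)) by (field; lra).
  lra.
Qed.
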